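(* Let $G$ be a non-complete double-critical $7$-chromatic graph with a vertex $x$ of degree $9$. Then: (a) the vertices of any maximum independent set $W=\{w_1,w_2,w_3\}$ of $G_x$ all have degree $5$ in $G_x$; (b) every vertex of $G_x$ has degree $5$, $6$ or $8$ in $G_x$; (c) for such $W$, every $w_i$ ($i=1,2,3$) has exactly one private non-neighbour with respect to $W$ in $G_x$, i.e. there exist three distinct vertices $y_1,y_2,y_3\in V(G_x)\setminus W$ such that each $w_i$ is adjacent to every vertex of $V(G_x)\setminus(W\cup\{y_i\})$ and not adjacent to $y_i$; (d) with $Z:=V(G_x)\setminus(W\cup\{y_1,y_2,y_3\})$, each $y_i$ has both a neighbour and a non-neighbour in $Z$.
   Context: All graphs are finite and simple. A graph $G$ is (vertex-)critical if $\chi(G-v)<\chi(G)$ for every vertex $v\in V(G)$. A critical graph $G$ is double-critical if $\chi(G-x-y)\le\chi(G)-2$ for every edge $xy\in E(G)$. For a vertex $x$, $G_x:=G[N(x)]$ denotes the subgraph induced by the neighbourhood of $x$. *)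

(* A finite simple graph is a symmetric irreflexive
   relation e on a finType T (the irreflexivity/symmetry hypotheses are
   binders of the main theorem). Induced subgraphs are given by vertex sets. *)
From mathcomp Require Import all_boot.
Set Implicit Arguments. Unset Strict Implicit. Unset Printing Implicit Defensive.

Section Graph.
Variables (T : finType) (e : rel T).

(* The induced subgraph G[S] has a proper colouring using colours 0..k-1.
   (Colours outside S are irrelevant; the test x != y only matters for
   loops, which simple graphs do not have.) *)
Definition colorableb (S : {set T}) (k : nat) : bool :=
  [exists f : {ffun T -> 'I_k.+1},
     [forall x in S, (f x < k) &&
        [forall y in S, ((x != y) && e x y) ==> (f x != f y)]]].

Lemma colorable_ex (S : {set T}) : exists k, colorableb S k.
Proof.
exists #|T|; apply/existsP; exists [ffun x => inord (enum_rank x)].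
apply/forallP => x; apply/implyP => _; rewrite !ffunE.
have Hx : (enum_rank x < #|T|.+1)%N by apply: leqW; exact: ltn_ord.
rewrite inordK // ltn_ord /=.
apply/forallP => y; apply/implyP => _; apply/implyP => /andP [nxy _]; rewrite ffunE.
have Hy : (enum_rank y < #|T|.+1)%N by apply: leqW; exact: ltn_ord.
apply/negP => /eqP /(congr1 val); rewrite /= !inordK // => /val_inj /enum_rank_inj Exy.
by rewrite Exy eqxx in nxy.
Qed.

Definition chi (S : {set T}) : nat := ex_minn (colorable_ex S).

Definition chiG : nat := chi setT.

Definition critical : Prop := forall v : T, chi (setT :\ v) < chiG.

Definition double_critical : Prop :=
  critical /\ forall x y : T, e x y -> chi ((setT :\ x) :\ y) <= chiG - 2.

Definition complete : Prop := forall x y : T, x != y -> e x y.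

(* neighbourhood N(x); G_x = G[N(x)] *)
Definition nbhd (x : T) : {set T} := [set y | e x y].

Definition deg (x : T) : nat := #|nbhd x|.

Definition deg_in (S : {set T}) (v : T) : nat := #|S :&: nbhd v|.

Definition independent_in (S W : {set T}) : bool :=
  (W \subset S) && [forall u in W, forall v in W, ~~ e u v].

Definition max_independent_in (S W : {set T}) : Prop :=
  independent_in S W /\
  forall W' : {set T}, independent_in S W' -> #|W'| <= #|W|.

End Graph.

From mathcomp Require Import all_boot zify.
Set Implicit Arguments. Unset Strict Implicit. Unset Printing Implicit Defensive.

(* If xu is an edge of a
   double-critical graph with chromatic number k + 2, then G - x - u has a
   k-colouring f in which every colour c < k occurs on a common neighbour of x
   and u: otherwise colouring x with c, and u together with the c-coloured
   neighbours of x with a new colour k, would (k + 1)-colour G.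
   For k = 5 every vertex of G_x therefore has degree at least 5 in G_x, hence
   at most 3 non-neighbours there when deg x = 9; and a non-neighbour u of v in
   G_x always has a neighbour in G_x outside N(v), so v never has exactly one
   non-neighbour.  For an independent triple W, each w in W thus has exactly one
   non-neighbour y_w outside W.  Counting shows that y_w has a neighbour in Z,
   and in the colouring of G - x - w the common neighbour of x and w coloured
   like y_w is a non-neighbour of y_w in Z. *)

Section Graphs.
Variables (T : finType) (e : rel T).
Hypothesis e_irr : irreflexive e.

Lemma edge_neq x y : e x y -> x != y.
Proof. by apply: contraTneq => ->; rewrite e_irr. Qed.

Definition coloring_on (S : {set T}) (k : nat) (f : T -> nat) : Prop :=
  {in S, forall z, f z < k} /\ {in S &, forall z y, e z y -> f z != f y}.

Lemma colorableP S k : reflect (exists f, coloring_on S k f) (colorableb e S k).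
Proof.
apply: (iffP existsP) => [[f /forallP f_col] | [f [f_lt f_pr]]].
  exists (fun z => nat_of_ord (f z)); split=> [z zS | z y zS yS ezy].
    by have /implyP/(_ zS)/andP[] := f_col z.
  have /implyP/(_ zS)/andP[_ /forallP/(_ y)/implyP/(_ yS)] := f_col z.
  by move/implyP; apply; rewrite ezy edge_neq.
exists [ffun z => inord (f z)]; apply/forallP => z; apply/implyP => zS.
have f_ltS t : t \in S -> f t < k.+1 by move/f_lt/ltnW.
rewrite ffunE inordK ?f_lt ?f_ltS //=.
apply/forallP => y; apply/implyP => yS; apply/implyP => /andP[_ ezy].
rewrite !ffunE; apply: contra (f_pr _ _ zS yS ezy) => /eqP/(congr1 val).
by rewrite /= !inordK ?f_ltS // => ->.
Qed.

Lemma chi_coloring S : exists f, coloring_on S (chi e S) f.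
Proof. by apply/colorableP; rewrite /chi; case: ex_minnP. Qed.

Lemma chi_le_coloring S k f : coloring_on S k f -> chi e S <= k.
Proof. by move=> f_col; rewrite /chi; case: ex_minnP => m _; apply; apply/colorableP; exists f. Qed.

Hypothesis e_sym : symmetric e.

Lemma coloring_extend_edge x u k c f :
  e x u -> coloring_on (setT :\ x :\ u) k f -> c < k ->
  (forall t, e x t -> e u t -> f t != c) -> exists g, coloring_on setT k.+1 g.
Proof.
move=> exu [f_lt f_pr] ltck no_common.
have inS z : z != x -> z != u -> z \in setT :\ x :\ u by rewrite !inE => -> ->.
pose K z := (z == u) || e x z && (f z == c).
pose g z := if z == x then c else if K z then k else f z.
have K_u y : K y -> ~~ e u y.
  case/orP=> [/eqP-> | /andP[exy /eqP fyc]]; first by rewrite e_irr.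
  by apply/negP => /(no_common y exy); rewrite fyc eqxx.
have K_indep z y : z != x -> y != x -> K z -> K y -> ~~ e z y.
  move=> zx yx Kz Ky; case: (eqVneq z u) => [-> | zu]; first exact: K_u.
  case: (eqVneq y u) => [-> | yu]; first by rewrite e_sym K_u.
  move: Kz Ky; rewrite /K (negbTE zu) (negbTE yu) /= => /andP[_ /eqP fzc] /andP[_ /eqP fyc].
  by apply: (contraL (f_pr z y (inS _ zx zu) (inS _ yx yu))); rewrite fzc fyc.
have g_x_nbr z : e x z -> g z != c.
  move=> exz; have zx : z != x by rewrite eq_sym edge_neq.
  rewrite /g (negbTE zx); case: ifP => [_|]; first by rewrite eq_sym ltn_eqF.
  by rewrite /K exz /= => /negbT/norP[].
exists g; split=> [z _ | z y _ _ ezy].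
  rewrite /g; case: ifP => [_|/negbT zx]; first exact: ltnW.
  by case: ifP => [_| /negbT/norP[zu _]]; last exact/ltnW/f_lt/inS.
case: (eqVneq z x) => [zx | zx]; first by rewrite {1}/g zx eqxx eq_sym g_x_nbr -?zx.
case: (eqVneq y x) => [yx | yx]; first by rewrite {2}/g yx eqxx g_x_nbr // e_sym -yx.
rewrite /g (negbTE zx) (negbTE yx).
case Kz: (K z); case Ky: (K y).
- by rewrite (negbTE (K_indep _ _ zx yx Kz Ky)) in ezy.
- by move: Ky => /norP[yu _]; rewrite eq_sym neq_ltn f_lt ?inS.
- by move: Kz => /norP[zu _]; rewrite neq_ltn f_lt ?inS.
- by move: Kz Ky => /norP[zu _] /norP[yu _]; apply: f_pr; rewrite ?inS.
Qed.

Definition nonnbhd_in (S : {set T}) (v : T) : {set T} := S :\ v :\: nbhd e v.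

Lemma card_nonnbhd_in (S : {set T}) v :
  v \in S -> (#|nonnbhd_in S v| + deg_in e S v).+1 = #|S|.
Proof.
move=> vS; rewrite (cardsD1 v S) vS add1n -(cardsID (nbhd e v) (S :\ v)) addnC.
rewrite /deg_in /nonnbhd_in; congr (_ + _).+1; apply: eq_card => t; rewrite !inE.
by case: (eqVneq t v) => // ->; rewrite e_irr andbF.
Qed.

Definition private_nonneighbour (S W : {set T}) (w y : T) : bool :=
  (y \notin W) && (nonnbhd_in S w == y |: (W :\ w)).

Lemma private_nonneighbour_in S W w y :
  private_nonneighbour S W w y -> y \in nonnbhd_in S w.
Proof. by case/andP=> _ /eqP->; rewrite setU11. Qed.

Lemma private_nonneighbour_mem S W w y :
  private_nonneighbour S W w y -> y \in S :\: W.
Proof.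
move=> py; case/andP: (py) => yW _; rewrite in_setD yW.
by move: (private_nonneighbour_in py); rewrite !inE => /and3P[].
Qed.

Lemma private_nonneighbour_nonadj S W w y : private_nonneighbour S W w y -> ~~ e w y.
Proof. by move=> /private_nonneighbour_in; rewrite !inE => /and3P[]. Qed.

Lemma private_nonneighbour_uniq S W w y y' :
  private_nonneighbour S W w y -> private_nonneighbour S W w y' -> y = y'.
Proof.
move=> py /andP[_ /eqP Nw]; have := private_nonneighbour_in py.
by case/andP: py => yW _; rewrite Nw !inE (negbTE yW) andbF orbF => /eqP.
Qed.

Lemma private_nonneighbour_adj S (W : {set T}) w y z : w \in W ->
  private_nonneighbour S W w y -> z \in S :\: (y |: W) -> e w z.
Proof.
move=> wW /andP[_ /eqP Nw]; rewrite !inE negb_or => /andP[/andP[zy zW] zS].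
apply: contraR zy => nwz; have : z \in nonnbhd_in S w.
  by rewrite !inE nwz zS andbT; apply: contraNneq zW => ->.
by rewrite Nw !inE (negbTE zW) andbF orbF.
Qed.

End Graphs.

Section DoubleCritical.
Variables (T : finType) (e : rel T).
Hypotheses (e_sym : symmetric e) (e_irr : irreflexive e) (Hdc : double_critical e).

Section ChromaticNumber.
Variable k : nat.
Hypothesis chiG_k : chiG e = k.+2.

Lemma double_critical_coloring x u : e x u ->
  exists2 f, coloring_on e (setT :\ x :\ u) k f &
    forall c, c < k -> exists t, [/\ e x t, e u t & f t = c].
Proof.
move=> exu; have [f [f_lt f_pr]] := chi_coloring e_irr (setT :\ x :\ u).
have chi_le : chi e (setT :\ x :\ u) <= k.
  by have := Hdc.2 _ _ exu; rewrite chiG_k !subSS subn0.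
have f_col : coloring_on e (setT :\ x :\ u) k f.
  by split=> // z zS; exact: leq_trans (f_lt z zS) chi_le.
exists f => // c ltck.
have [t /and3P[ext eut /eqP ftc] | no_common] :=
  pickP [pred t | [&& e x t, e u t & f t == c]]; first by exists t.
have [g /(chi_le_coloring e_irr)] : exists g, coloring_on e setT k.+1 g.
  apply: (coloring_extend_edge e_irr e_sym exu f_col ltck) => t ext eut.
  by have := no_common t; rewrite /= ext eut => /negbT.
by rewrite -/(chiG e) chiG_k ltnn.
Qed.

Lemma common_nonneighbour x u v : e x u -> e x v -> ~~ e u v -> u != v ->
  exists t, [/\ e x t, e u t & ~~ e v t].
Proof.
move=> exu exv nuv uv; have [f [f_lt f_pr] f_all] := double_critical_coloring exu.
have inS z : e x z -> z != u -> z \in setT :\ x :\ u.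
  by move=> exz zu; rewrite !inE zu eq_sym (edge_neq e_irr exz).
have vS : v \in setT :\ x :\ u by rewrite inS // eq_sym.
have [t [ext eut ftv]] := f_all _ (f_lt _ vS).
have tS : t \in setT :\ x :\ u by rewrite inS // eq_sym (edge_neq e_irr eut).
by exists t; split=> //; apply/negP => /(f_pr _ _ vS tS); rewrite ftv eqxx.
Qed.

Lemma deg_in_nbhd_ge x u : e x u -> k <= deg_in e (nbhd e x) u.
Proof.
move=> exu; have [f _ f_all] := double_critical_coloring exu.
rewrite /deg_in cardE -(size_map f) -(size_iota 0 k).
apply: uniq_leq_size (iota_uniq 0 k) _ => c.
rewrite mem_iota add0n => /f_all[t [ext eut <-]].
by apply: map_f; rewrite mem_enum !inE ext eut.
Qed.

Lemma card_nonnbhd_in_neq1 x v : e x v -> #|nonnbhd_in e (nbhd e x) v| != 1.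
Proof.
move=> exv; apply/negP => /cards1P[u Nv].
have : u \in nonnbhd_in e (nbhd e x) v by rewrite Nv set11.
rewrite !inE => /and3P[nvu uv exu].
have nuv : ~~ e u v by rewrite e_sym.
have [t [ext eut nvt]] := common_nonneighbour exu exv nuv uv.
have : t \in nonnbhd_in e (nbhd e x) v.
  by rewrite !inE nvt ext andbT; apply: contraTneq eut => ->; rewrite e_sym.
by rewrite Nv inE => /eqP tu; rewrite tu e_irr in eut.
Qed.

End ChromaticNumber.

Section DegreeNine.
Hypothesis chiG7 : chiG e = 7.
Variable x : T.
Hypothesis deg9 : deg e x = 9.

Lemma card_nonnbhd_nbhd v : e x v ->
  (#|nonnbhd_in e (nbhd e x) v| + deg_in e (nbhd e x) v).+1 = 9.
Proof. by move=> exv; rewrite -deg9 card_nonnbhd_in // inE. Qed.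

Lemma card_nonnbhd_nbhd_le3 v : e x v -> #|nonnbhd_in e (nbhd e x) v| <= 3.
Proof.
by move=> exv; have := card_nonnbhd_nbhd exv; have := deg_in_nbhd_ge chiG7 exv; lia.
Qed.

Lemma deg_in_nbhd_5_6_8 v : e x v -> deg_in e (nbhd e x) v \in [:: 5; 6; 8].
Proof.
move=> exv; have := card_nonnbhd_nbhd exv; have := deg_in_nbhd_ge chiG7 exv.
by have := card_nonnbhd_in_neq1 chiG7 exv; rewrite !inE; lia.
Qed.

Section IndependentTriple.
Variable W : {set T}.
Hypotheses (W_indep : independent_in e (nbhd e x) W) (W_card : #|W| = 3).

Local Notation private := (private_nonneighbour e (nbhd e x) W).

Let W_nbhd w : w \in W -> e x w.
Proof. by case/andP: W_indep => /subsetP sW _ /sW; rewrite inE. Qed.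

Let W_nonadj a b : a \in W -> b \in W -> ~~ e a b.
Proof. by case/andP: W_indep => _ /forallP/(_ a)/implyP Wa /Wa/forallP/(_ b)/implyP. Qed.

Let card_W_del a : a \in W -> #|W :\ a| = 2.
Proof. by move=> aW; move: W_card; rewrite (cardsD1 a) aW => -[]. Qed.

Let nbr_notin_W a t : a \in W -> e a t -> t \notin W.
Proof. by move=> aW; apply: contraTN => /(W_nonadj aW). Qed.

Lemma private_nonneighbour_exists a : a \in W -> exists y, private a y.
Proof.
move=> aW; have /card_gt0P[b] : 0 < #|W :\ a| by rewrite card_W_del.
rewrite !inE => /andP[ba bW].
have [t [ext ebt nat]] := common_nonneighbour chiG7 (W_nbhd bW) (W_nbhd aW) (W_nonadj bW aW) ba.
have tW := nbr_notin_W bW ebt.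
exists t; rewrite /private_nonneighbour tW eq_sym eqEcard.
rewrite cardsU1 card_W_del // !inE (negbTE tW) andbF /=.
rewrite (leq_trans (card_nonnbhd_nbhd_le3 (W_nbhd aW))) // andbT.
apply/subsetP => z; rewrite !inE => /orP[/eqP-> | /andP[za zW]].
  by rewrite nat ext andbT; apply: contraTneq ebt => ->; apply: W_nonadj.
by rewrite W_nonadj // za W_nbhd.
Qed.

Lemma deg_in_independent a : a \in W -> deg_in e (nbhd e x) a = 5.
Proof.
move=> aW; have [y /andP[yW /eqP Na]] := private_nonneighbour_exists aW.
have := card_nonnbhd_nbhd (W_nbhd aW).
by rewrite Na cardsU1 card_W_del // !inE (negbTE yW) andbF /= => -[].
Qed.

Lemma private_nonneighbour_neq a b ya yb : a \in W -> b \in W -> a != b ->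
  private a ya -> private b yb -> ya != yb.
Proof.
move=> aW bW ab /private_nonneighbour_nonadj naya /andP[_ /eqP Nb].
have [t [ext eat nbt]] := common_nonneighbour chiG7 (W_nbhd aW) (W_nbhd bW) (W_nonadj aW bW) ab.
have : t \in nonnbhd_in e (nbhd e x) b.
  by rewrite !inE nbt ext andbT; apply: contraTneq eat => ->; apply: W_nonadj.
rewrite Nb !inE (negbTE (nbr_notin_W aW eat)) andbF orbF => /eqP tyb.
by apply: contraNneq naya => ->; rewrite -tyb.
Qed.

Lemma private_nonneighbour_has_nbr a ya (Y : {set T}) : a \in W -> private a ya ->
  ya \in Y -> #|Y| <= 3 -> exists2 z, z \in nbhd e x :\: (W :|: Y) & e ya z.
Proof.
move=> aW pya yaY Y3; set Z := nbhd e x :\: (W :|: Y).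
have Z3 : 3 <= #|Z|.
  rewrite /Z; have := subset_leq_card (subsetIr (nbhd e x) (W :|: Y)).
  have := cardsID (W :|: Y) (nbhd e x); have := (leq_card_setU W Y).1.
  by have := deg9; rewrite /deg W_card; lia.
have [z /andP[zZ eyz] | no_nbr] := pickP [pred z in Z | e ya z]; first by exists z.
move: (private_nonneighbour_in pya); rewrite !inE => /and3P[naya yaa exya].
have sub : a |: Z \subset nonnbhd_in e (nbhd e x) ya.
  apply/subsetP => z; rewrite in_setU1 => /orP[/eqP-> | zZ].
    by rewrite !inE e_sym naya eq_sym yaa W_nbhd.
  have nyaz : ~~ e ya z by move: (no_nbr z); rewrite /= zZ => /negbT.
  move: zZ; rewrite /Z !inE negb_or nyaz => /andP[/andP[_ zY] ->].
  by rewrite andbT; apply: contraNneq zY => ->.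
have aZ : a \notin Z by rewrite !inE aW.
have := card_nonnbhd_nbhd_le3 exya; have := subset_leq_card sub.
by rewrite cardsU1 aZ; lia.
Qed.

Section ColouringAvoidingEdge.
Variables (a : T) (f : T -> nat).
Hypotheses (aW : a \in W) (f_col : coloring_on e (setT :\ x :\ a) 5 f)
  (f_all : forall c, c < 5 -> exists t, [/\ e x t, e a t & f t = c]).

Let inS v : e x v -> v != a -> v \in setT :\ x :\ a.
Proof. by move=> exv va; rewrite !inE va eq_sym (edge_neq e_irr exv). Qed.

Let colour_mate v : e x v -> v != a -> exists t, [/\ e x t, e a t & f t = f v].
Proof. by move=> exv va; apply: f_all; case: f_col => f_lt _; apply/f_lt/inS. Qed.

Let same_colour_nonadj v t : e x v -> e x t -> v != a -> t != a -> f v = f t -> ~~ e v t.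
Proof.
move=> exv ext va ta fvt; apply/negP => /(f_col.2 _ _ (inS exv va) (inS ext ta)).
by rewrite fvt eqxx.
Qed.

Let mate_neq_a t : e a t -> t != a.
Proof. by move=> eat; rewrite eq_sym (edge_neq e_irr eat). Qed.

Lemma private_nonneighbour_colour w y : w \in W -> w != a -> private w y -> f y = f w.
Proof.
move=> wW wa /andP[_ /eqP Nw]; have [t [ext eat ftw]] := colour_mate (W_nbhd wW) wa.
have nwt := same_colour_nonadj (W_nbhd wW) ext wa (mate_neq_a eat) (esym ftw).
have : t \in nonnbhd_in e (nbhd e x) w.
  by rewrite !inE ext nwt andbT; apply: contraTneq eat => ->; apply: W_nonadj.
rewrite Nw !inE (negbTE (nbr_notin_W aW eat)) andbF orbF => /eqP <-.
exact: ftw.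
Qed.

Lemma private_nonneighbour_has_nonnbr ya (Y : {set T}) : private a ya -> ya \in Y ->
  {in Y, forall y, exists2 w, w \in W & private w y} ->
  exists2 z, z \in nbhd e x :\: (W :|: Y) & ~~ e ya z.
Proof.
move=> pya yaY Y_private.
move: (private_nonneighbour_in pya); rewrite !inE => /and3P[naya yaa exya].
(* [t] has the colour of [ya], whereas a private non-neighbour [y] of [w != a]
   has the colour of [w], a neighbour of [ya]. *)
have [t [ext eat ftya]] := colour_mate exya yaa.
exists t; last exact: same_colour_nonadj exya ext yaa (mate_neq_a eat) (esym ftya).
rewrite !inE ext negb_or (nbr_notin_W aW eat) andbT /=.
apply/negP => /Y_private[w wW pwt]; case: (eqVneq w a) => [wa | wa].
  by move: pwt naya; rewrite wa => /(private_nonneighbour_uniq pya) ->; rewrite eat.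
have yaW : ya \notin W by case/andP: pya.
have eway : e w ya.
  apply: (private_nonneighbour_adj wW pwt); rewrite !inE exya negb_or yaW andbT /=.
  by rewrite (private_nonneighbour_neq aW wW _ pya pwt) // eq_sym.
move/eqP: (f_col.2 _ _ (inS (W_nbhd wW) wa) (inS exya yaa) eway).
by rewrite -ftya (private_nonneighbour_colour wW wa pwt).
Qed.

End ColouringAvoidingEdge.

Lemma private_nonneighbour_outside a ya (Y : {set T}) : a \in W -> private a ya ->
  ya \in Y -> #|Y| <= 3 -> {in Y, forall y, exists2 w, w \in W & private w y} ->
  let Z := nbhd e x :\: (W :|: Y) in
  (exists2 z, z \in Z & e ya z) /\ (exists2 z, z \in Z & ~~ e ya z).
Proof.
move=> aW pya yaY Y3 Y_private; split.
  exact: private_nonneighbour_has_nbr aW pya yaY Y3.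
have [f f_col f_all] := double_critical_coloring chiG7 (W_nbhd aW).
by have := private_nonneighbour_has_nonnbr aW f_col f_all pya yaY Y_private.
Qed.

End IndependentTriple.
End DegreeNine.
End DoubleCritical.

Theorem proposition28 (T : finType) (e : rel T)
  (e_sym : symmetric e) (e_irr : irreflexive e)
  (Hdc : double_critical e) (Hnc : ~ complete e) (H7 : chiG e = 7)
  (x : T) (Hx : deg e x = 9) :
  (forall v, v \in nbhd e x ->
     deg_in e (nbhd e x) v \in [:: 5; 6; 8]) /\
  (forall w1 w2 w3 : T,
     w1 != w2 -> w1 != w3 -> w2 != w3 ->
     max_independent_in e (nbhd e x) [set w1; w2; w3] ->
     let W := [set w1; w2; w3] in
     [/\ deg_in e (nbhd e x) w1 = 5, deg_in e (nbhd e x) w2 = 5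
       & deg_in e (nbhd e x) w3 = 5] /\
     exists y1 y2 y3 : T,
       [/\ y1 != y2, y1 != y3 & y2 != y3] /\
       [/\ y1 \in nbhd e x :\: W, y2 \in nbhd e x :\: W
         & y3 \in nbhd e x :\: W] /\
       [/\ ~~ e w1 y1, ~~ e w2 y2 & ~~ e w3 y3] /\
       [/\ forall z, z \in nbhd e x :\: (y1 |: W) -> e w1 z,
           forall z, z \in nbhd e x :\: (y2 |: W) -> e w2 z
         & forall z, z \in nbhd e x :\: (y3 |: W) -> e w3 z] /\
       let Z := nbhd e x :\: (W :|: [set y1; y2; y3]) in
       [/\ (exists2 z, z \in Z & e y1 z) /\ (exists2 z, z \in Z & ~~ e y1 z),
           (exists2 z, z \in Z & e y2 z) /\ (exists2 z, z \in Z & ~~ e y2 z)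
         & (exists2 z, z \in Z & e y3 z) /\ (exists2 z, z \in Z & ~~ e y3 z)]).
Proof.
split=> [v | w1 w2 w3 w12 w13 w23 [W_indep _] W].
  by rewrite inE; exact: deg_in_nbhd_5_6_8.
have W_card : #|W| = 3 by rewrite /W -setUA !cardsU1 cards1 !inE negb_or w12 w13 w23.
have [w1W w2W w3W] : [/\ w1 \in W, w2 \in W & w3 \in W] by rewrite !inE !eqxx !orbT.
have private_exists := private_nonneighbour_exists e_sym e_irr Hdc H7 Hx W_indep W_card.
have [y1 p1] := private_exists _ w1W.
have [y2 p2] := private_exists _ w2W.
have [y3 p3] := private_exists _ w3W.
have private_neq := private_nonneighbour_neq e_sym e_irr Hdc H7 W_indep.
have private_out := private_nonneighbour_outside e_sym e_irr Hdc H7 Hx W_indep W_card.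
set Y := [set y1; y2; y3].
have [y1Y y2Y y3Y] : [/\ y1 \in Y, y2 \in Y & y3 \in Y] by rewrite !inE !eqxx !orbT.
have Y_card : #|Y| <= 3 by rewrite /Y -setUA !cardsU1 cards1; do 2 case: (_ \notin _).
have Y_private : {in Y, forall y, exists2 w, w \in W & private_nonneighbour e (nbhd e x) W w y}.
  by move=> y; rewrite !inE -orbA => /or3P[] /eqP->; [exists w1 | exists w2 | exists w3].
split; first by rewrite !(deg_in_independent e_sym e_irr Hdc H7 Hx W_indep W_card).
exists y1, y2, y3; split.
  by split; [exact: private_neq w1W w2W w12 p1 p2 | exact: private_neq w1W w3W w13 p1 p3
           | exact: private_neq w2W w3W w23 p2 p3].
split; first by split; [exact: private_nonneighbour_mem p1 | exact: private_nonneighbour_mem p2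
                      | exact: private_nonneighbour_mem p3].
split; first by split; [exact: private_nonneighbour_nonadj p1
                      | exact: private_nonneighbour_nonadj p2
                      | exact: private_nonneighbour_nonadj p3].
split; first by split=> z; [exact: private_nonneighbour_adj w1W p1
                          | exact: private_nonneighbour_adj w2W p2
                          | exact: private_nonneighbour_adj w3W p3].
by split; [exact: private_out w1W p1 y1Y Y_card Y_private
         | exact: private_out w2W p2 y2Y Y_card Y_private
         | exact: private_out w3W p3 y3Y Y_card Y_private].
Qed.
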